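(* Let $(C,\ll)$ be an abstract basis that is also interpolative from the $+$ direction, i.e. for every $x\in C$ and finite $F\subseteq C$ with $x\ll f$ for all $f\in F$, there is $y\in C$ with $x\ll y$ and $y\ll f$ for all $f\in F$. Let $\mathrm{int}(C)=\{(a,b)\in C^2: a\ll b\}$ with the relation $(a,b)\ll(c,d)$ iff $a\ll c$ and $d\ll b$. Then $(\mathrm{int}(C),\ll)$ is an abstract basis.
   Context: An abstract basis is a set $B$ with a transitive relation $<$ that is interpolative: for every $x\in B$ and every finite $M\subseteq B$ with $m<x$ for all $m\in M$, there exists $y\in B$ with $m<y$ for all $m\in M$ and $y<x$. *)

From Stdlib Require Import List.
Import ListNotations.

(* Finite subsets of a type are represented by (finite) lists. *)

Definition interpolative {B : Type} (R : B -> B -> Prop) : Prop :=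
  forall (x : B) (M : list B),
    (forall m, In m M -> R m x) ->
    exists y : B, (forall m, In m M -> R m y) /\ R y x.

Definition abstract_basis {B : Type} (R : B -> B -> Prop) : Prop :=
  (forall x y z, R x y -> R y z -> R x z) /\ interpolative R.

Definition interpolative_plus {B : Type} (R : B -> B -> Prop) : Prop :=
  forall (x : B) (F : list B),
    (forall f, In f F -> R x f) ->
    exists y : B, R x y /\ (forall f, In f F -> R y f).

Definition intC {C : Type} (R : C -> C -> Prop) : Type :=
  { p : C * C | R (fst p) (snd p) }.

Definition int_rel {C : Type} (R : C -> C -> Prop) (p q : intC R) : Prop :=
  R (fst (proj1_sig p)) (fst (proj1_sig q)) /\
  R (snd (proj1_sig q)) (snd (proj1_sig p)).

(* A family of intervals below the interval (x1, x2) in [int_rel R] is a family of left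
   endpoints below x1 and of right endpoints above x2.  Interpolating the former from below
   (ordinary interpolation) and the latter from above (interpolation from the + direction)
   gives endpoints y1 << x1 and x2 << y2, so (y1, y2) is again an interval by transitivity. *)

From Stdlib Require Import List.

Lemma in_map_forall {A B : Type} (f : A -> B) (P : B -> Prop) (l : list A) :
  (forall a, In a l -> P (f a)) -> forall b, In b (map f l) -> P b.
Proof.
  intros Hl b Hb. apply in_map_iff in Hb as [a [<- Ha]]. exact (Hl a Ha).
Qed.

Section IntervalBasis.

Context {C : Type} (R : C -> C -> Prop).
Hypothesis R_trans : forall x y z, R x y -> R y z -> R x z.

Lemma int_rel_trans (p q r : intC R) :
  int_rel R p q -> int_rel R q r -> int_rel R p r.
Proof.
  intros [Hpq1 Hpq2] [Hqr1 Hqr2]. split; eauto.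
Qed.

Hypotheses (R_interp : interpolative R) (R_interp_plus : interpolative_plus R).

Lemma int_rel_interpolative : interpolative (int_rel R).
Proof.
  intros [[x1 x2] Hx] M HM; simpl in Hx.
  destruct (R_interp x1 (map (fun p => fst (proj1_sig p)) M)) as [y1 [Hy1 Hy1x1]].
  { apply in_map_forall. intros p Hp. apply (HM p Hp). }
  destruct (R_interp_plus x2 (map (fun p => snd (proj1_sig p)) M)) as [y2 [Hx2y2 Hy2]].
  { apply in_map_forall. intros p Hp. apply (HM p Hp). }
  assert (Hy : R y1 y2) by eauto.
  exists (exist _ (y1, y2) Hy). split.
  - intros p Hp. split; simpl.
    + apply Hy1, in_map_iff. eauto.
    + apply Hy2, in_map_iff. eauto.
  - split; assumption.
Qed.

End IntervalBasis.

Theorem mainTheorem5 (C : Type) (R : C -> C -> Prop) :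
  abstract_basis R -> interpolative_plus R -> abstract_basis (int_rel R).
Proof.
  intros [R_trans R_interp] R_interp_plus. split.
  - exact (int_rel_trans R R_trans).
  - exact (int_rel_interpolative R R_trans R_interp R_interp_plus).
Qed.
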